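(* Let $M$ be a finite-dimensional left $\mathsf{VBr}_{r,t}(\omega)$-module, decomposed as $M=\bigoplus_{\mathbf a\in\mathrm{Seq}_{r,t},\,\mathbf i\in\mathbb C^{r+t}}1_{\mathbf a}M_{\mathbf i}$. Then for all $k\in\{1,\dots,r+t-1\}$, $\mathbf a\in\mathrm{Seq}_{r,t}$ and $\mathbf i\in\mathbb C^{r+t}$, $$s_k1_{\mathbf a}M_{\mathbf i}\subseteq 1_{\mathbf a}M_{\mathbf i}+1_{\mathbf a}M_{\mathsf s_k\mathbf i}.$$
   Context: $\mathrm{Seq}_{r,t}$: sequences $\mathbf a\in\{\wedge,\vee\}^{r+t}$ with exactly $r$ entries $\wedge$; $J=\{1,\dots,r+t-1\}$; $\mathsf s_k$ swaps entries $k,k+1$ of a sequence (also of $\mathbf i\in\mathbb C^{r+t}$). $\mathrm{Br}_{r,t}(\gamma)$: basis oriented Brauer diagrams $\mathbf a\to\mathbf b$ (perfect matchings between bottom row labelled $\mathbf a$ and top row labelled $\mathbf b$; bottom-to-top strands join equal labels, strands within a row join different labels), product by stacking (second factor below), $0$ if labels mismatch, loops replaced by $\gamma$. $1_{\mathbf a}$ identity; for $k\in J$: if $a_k=a_{k+1}$, $s_k1_{\mathbf a}$ crosses strands $k,k+1$ ($\mathbf a\to\mathbf a$); if $a_k\neq a_{k+1}$, $\hat s_k1_{\mathbf a}$ crossing $\mathbf a\to\mathsf s_k\mathbf a$, $e_k1_{\mathbf a}$ cap at bottom $k,k+1$ and cup at top $k,k+1$ ($\mathbf a\to\mathbf a$),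 $\hat e_k1_{\mathbf a}$ same shape $\mathbf a\to\mathsf s_k\mathbf a$; these are $0$ when the condition fails; $s_k=\sum_{\mathbf a}s_k1_{\mathbf a}$ etc. For $\omega=(\omega_j)_{j\ge0}\subset\mathbb C$, $\mathsf{VBr}_{r,t}(\omega)$ is the quotient of the free product $\mathrm{Br}_{r,t}(\omega_0)*\mathbb C[y_1,\dots,y_{r+t}]$ by: $y_i$ commutes with all $1_{\mathbf a}$, and with $s_k,\hat s_k,e_k,\hat e_k$ when $i\notin\{k,k+1\}$; $e_1y_1^je_11_{\mathbf a}=\omega_je_11_{\mathbf a}$ for $j\ge0$ and $(a_1,a_2)=(\wedge,\vee)$; for $a_k=a_{k+1}$: $s_ky_k1_{\mathbf a}-y_{k+1}s_k1_{\mathbf a}=-1_{\mathbf a}$, $s_ky_{k+1}1_{\mathbf a}-y_ks_k1_{\mathbf a}=1_{\mathbf a}$; $\hat s_ky_k-y_{k+1}\hat s_k=\hat e_k$, $\hat s_ky_{k+1}-y_k\hat s_k=-\hat e_k$; $e_k(y_k+y_{k+1})=(y_k+y_{k+1})e_k=\hat e_k(y_k+y_{k+1})=(y_k+y_{k+1})\hat e_k=0$. For a finite-dimensional module $M$: $1_{\mathbf a}M_{\mathbf i}=\{v\in1_{\mathbf a}M:(y_k-\mathrm i_k)^Nv=0\ \forall k, \text{ for } N\gg0\}$. *)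

From mathcomp Require Import all_boot all_order all_algebra all_fingroup.
From mathcomp Require Import complex.
From mathcomp Require Import Rstruct.

Set Implicit Arguments.
Unset Strict Implicit.
Unset Printing Implicit Defensive.

Import GRing.Theory.
Local Open Scope ring_scope.

Definition C : numClosedFieldType := (Rdefinitions.R)[i].

Section VBr.
Variable n : nat.  (* n = r + t; positions 1..n are the ordinals 'I_n (0-based) *)

(** Sequences in {wedge, vee}^n : wedge = true, vee = false. *)
Definition lseq := {ffun 'I_n -> bool}.
Definition is_Seq (r : nat) (a : lseq) : bool := #|[set j | a j]| == r.

(** s_k acting on sequences / on vectors i in C^n; k' is the position k+1. *)
Definition sk_seq (k k' : 'I_n) (a : lseq) : lseq := [ffun j => a (tperm k k' j)].
Definition sk_vec (k k' : 'I_n) (i : 'I_n -> C) : 'I_n -> C := fun j => i (tperm k k' j).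

(** Points of a diagram: inl j = bottom row position j, inr j = top row. *)
Definition pt := ('I_n + 'I_n)%type.
Definition diagram := {ffun pt -> pt}.

Definition is_top (x : pt) : bool := if x is inr _ then true else false.
Definition lab (a b : lseq) (x : pt) : bool :=
  match x with inl j => a j | inr j => b j end.

(** D is an oriented Brauer diagram a -> b (bottom labelled a, top labelled b):
    a fixed-point-free involution (perfect matching) such that strands
    between the rows join equal labels and strands within a row join
    different labels. *)
Definition is_diagram (a b : lseq) (D : diagram) : bool :=
  [forall x, [&& D (D x) == x, D x != x &
     (if is_top x == is_top (D x) then lab a b x != lab a b (D x)
      else lab a b x == lab a b (D x))]].

(** Stacking: D1 on top of D2 (D2 : a -> b, D1 : b -> c).
    Points of the stacked picture: inl (inl j) bottom of D2, inl (inr j)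
    middle row, inr j top of D1. *)
Definition pt3 := (('I_n + 'I_n) + 'I_n)%type.
Definition emb_low (x : pt) : pt3 :=
  match x with inl j => inl (inl j) | inr j => inl (inr j) end.
Definition emb_up (x : pt) : pt3 :=
  match x with inl j => inl (inr j) | inr j => inr j end.
Definition emb_out (x : pt) : pt3 :=
  match x with inl j => inl (inl j) | inr j => inr j end.
Definition is_middle (x : pt3) : bool :=
  match x with inl (inr _) => true | _ => false end.

Definition stack_edge (D1 D2 : diagram) : rel pt3 :=
  fun x y => [exists p, (x == emb_low p) && (y == emb_low (D2 p))]
          || [exists p, (x == emb_up p) && (y == emb_up (D1 p))].

Definition comp_diag (D1 D2 : diagram) : diagram :=
  [ffun x => odflt x [pick y | (y != x) &&
       connect (stack_edge D1 D2) (emb_out x) (emb_out y)]].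

Definition loop_pts (D1 D2 : diagram) : {set pt3} :=
  [set x | is_middle x &&
     [forall p, ~~ connect (stack_edge D1 D2) x (emb_out p)]].
Definition nloops (D1 D2 : diagram) : nat :=
  #|[set [set y | connect (stack_edge D1 D2) x y] | x in loop_pts D1 D2]|.

Definition id_diag : diagram :=
  [ffun x => match x with inl j => inr j | inr j => inl j end].
(** crossing of strands k, k+1 (shape of s_k 1_a and \hat s_k 1_a) *)
Definition swap_diag (k k' : 'I_n) : diagram :=
  [ffun x => match x with
             | inl j => inr (tperm k k' j) | inr j => inl (tperm k k' j) end].
(** cap at bottom k,k+1 and cup at top k,k+1, vertical strands elsewhere
    (shape of e_k 1_a and \hat e_k 1_a) *)
Definition e_diag (k k' : 'I_n) : diagram :=
  [ffun x => match x with
             | inl j => if (j == k) || (j == k') then inl (tperm k k' j) else inr j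
             | inr j => if (j == k) || (j == k') then inr (tperm k k' j) else inl j
             end].

End VBr.

(** A left VBr_{r,t}(omega)-module of finite dimension d, realised on the
    column vectors 'cV[C]_d.  Since Br_{r,t}(omega_0) has the oriented
    Brauer diagrams as a basis, its (unital) action is given by one
    endomorphism [rho a b D] per diagram D : a -> b, multiplying as the
    diagrams do; the C[y_1..y_n] action is given by commuting
    endomorphisms [Y j]; a module over the free product is a pair of such
    actions (sharing the unit), and the quotient relations are imposed. *)
Section Module.
Variables (r t : nat) (omega : nat -> C) (d : nat).
Local Notation n := (r + t).
Local Notation Mat := 'M[C]_d.

Definition one_a (rho : lseq n -> lseq n -> diagram n -> Mat) (a : lseq n) : Mat :=
  rho a a (id_diag n).
(** s_k 1_a, \hat s_k 1_a, e_k 1_a, \hat e_k 1_a (0 when the condition fails) *)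
Definition s1 rho (k k' : 'I_n) (a : lseq n) : Mat :=
  if a k == a k' then rho a a (swap_diag k k') else 0.
Definition hs1 rho (k k' : 'I_n) (a : lseq n) : Mat :=
  if a k != a k' then rho a (sk_seq k k' a) (swap_diag k k') else 0.
Definition e1 rho (k k' : 'I_n) (a : lseq n) : Mat :=
  if a k != a k' then rho a a (e_diag k k') else 0.
Definition he1 rho (k k' : 'I_n) (a : lseq n) : Mat :=
  if a k != a k' then rho a (sk_seq k k' a) (e_diag k k') else 0.
Definition s_ rho k k' : Mat := \sum_(a | is_Seq r a) s1 rho k k' a.
Definition hs_ rho k k' : Mat := \sum_(a | is_Seq r a) hs1 rho k k' a.
Definition e_ rho k k' : Mat := \sum_(a | is_Seq r a) e1 rho k k' a.
Definition he_ rho k k' : Mat := \sum_(a | is_Seq r a) he1 rho k k' a.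

Record VBr_module := {
  rho : lseq n -> lseq n -> diagram n -> Mat;
  Y : 'I_n -> Mat;
  rho_mul : forall (a b c : lseq n) (D1 D2 : diagram n),
    is_Seq r a -> is_Seq r b -> is_Seq r c ->
    is_diagram a b D2 -> is_diagram b c D1 ->
    rho b c D1 *m rho a b D2 = omega 0 ^+ nloops D1 D2 *: rho a c (comp_diag D1 D2);
  rho_mul0 : forall (a b b' c : lseq n) (D1 D2 : diagram n),
    is_Seq r a -> is_Seq r b -> is_Seq r b' -> is_Seq r c ->
    is_diagram a b D2 -> is_diagram b' c D1 -> b != b' ->
    rho b' c D1 *m rho a b D2 = 0;
  rho_unit : \sum_(a | is_Seq r a) one_a rho a = 1%:M;
  Y_comm : forall j l, Y j *m Y l = Y l *m Y j;
  Y_one : forall j a, is_Seq r a -> Y j *m one_a rho a = one_a rho a *m Y j;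
  Y_far : forall (k k' j : 'I_n), val k' = (val k).+1 -> j != k -> j != k' ->
    [/\ Y j *m s_ rho k k' = s_ rho k k' *m Y j,
        Y j *m hs_ rho k k' = hs_ rho k k' *m Y j,
        Y j *m e_ rho k k' = e_ rho k k' *m Y j &
        Y j *m he_ rho k k' = he_ rho k k' *m Y j];
  Y_e1 : forall (k0 k1 : 'I_n), val k0 = 0%N -> val k1 = 1%N ->
    forall a, is_Seq r a -> a k0 = true -> a k1 = false ->
    forall j : nat,
      e_ rho k0 k1 *m Y k0 ^+ j *m e_ rho k0 k1 *m one_a rho a
      = omega j *: (e_ rho k0 k1 *m one_a rho a);
  Y_s : forall (k k' : 'I_n), val k' = (val k).+1 ->
    forall a, is_Seq r a -> a k = a k' ->
      s_ rho k k' *m Y k *m one_a rho a - Y k' *m s_ rho k k' *m one_a rho a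
        = - one_a rho a /\
      s_ rho k k' *m Y k' *m one_a rho a - Y k *m s_ rho k k' *m one_a rho a
        = one_a rho a;
  Y_hs : forall (k k' : 'I_n), val k' = (val k).+1 ->
    hs_ rho k k' *m Y k - Y k' *m hs_ rho k k' = he_ rho k k' /\
    hs_ rho k k' *m Y k' - Y k *m hs_ rho k k' = - he_ rho k k';
  Y_e : forall (k k' : 'I_n), val k' = (val k).+1 ->
    [/\ e_ rho k k' *m (Y k + Y k') = 0, (Y k + Y k') *m e_ rho k k' = 0,
        he_ rho k k' *m (Y k + Y k') = 0 & (Y k + Y k') *m he_ rho k k' = 0]
}.

(** v lies in 1_a M_i : v in 1_a M and (y_j - i_j)^N v = 0 for all j, N >> 0 *)
Definition in_wt (M : VBr_module) (a : lseq n) (i : 'I_n -> C) (v : 'cV[C]_d) : Prop :=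
  (exists w, v = one_a (rho M) a *m w) /\
  (exists N : nat, forall j : 'I_n, (Y M j - (i j)%:M) ^+ N *m v = 0).

End Module.

(* If [a_k <> a_{k+1}] then [s_k 1_a = 0]. Otherwise let [T = s_k 1_a]. As [1_a] is an
   idempotent commuting with the [y_j], the defining relations become
   [T y_k = y_{k+1} T - 1_a] and [T y_{k+1} = y_k T + 1_a], so [T] commutes with
   [y_k + y_{k+1}], with [y_k y_{k+1}] and with the other [y_j]. For [v] in [1_a M_i],
   [T v] is therefore killed by powers of [y_k + y_{k+1} - (i_k + i_{k+1})] and of
   [y_k y_{k+1} - i_k i_{k+1}], hence by powers of [(y_k - i_k)(y_k - i_{k+1})].
   A Bezout identity between [(X - i_k)^m] and [(X - i_{k+1})^m] splits [T v] into
   generalized eigenvectors of [y_k] for [i_k] and for [i_{k+1}], and on each piece the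
   generalized eigenvalue of [y_k + y_{k+1}] fixes that of [y_{k+1}]. *)

From mathcomp Require Import all_boot all_order all_algebra all_fingroup ring.
From mathcomp Require Import complex Rstruct.
Set Implicit Arguments. Unset Strict Implicit. Unset Printing Implicit Defensive.
Import GRing.Theory.
Local Open Scope ring_scope.

Section NilAt.
Variables (R : comPzRingType) (d : nat).
Implicit Types (A B : 'M[R]_d) (z : 'cV[R]_d) (a b : R).

Definition nil_at A z := exists N, A ^+ N *m z = 0.

Lemma expmx_mul_eq0W A z N N' : A ^+ N *m z = 0 -> (N <= N')%N -> A ^+ N' *m z = 0.
Proof. by move=> Az0 /subnK <-; rewrite exprD -mulmxE -mulmxA Az0 mulmx0. Qed.

Lemma nil_at_mulmx A B z : comm_mx A B -> nil_at A z -> nil_at A (B *m z).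
Proof.
move=> cAB [N AN0]; exists N.
have cANB : comm_mx (A ^+ N) B by apply/commr_sym/commrX/commr_sym.
by rewrite mulmxA cANB -mulmxA AN0 mulmx0.
Qed.

Lemma nil_at_mull A B z : comm_mx B A -> nil_at A z -> nil_at (B *m A) z.
Proof.
by move=> cBA [N AN0]; exists N; rewrite mulmxE exprMn_comm // -mulmxE -mulmxA AN0 mulmx0.
Qed.

Lemma nil_at_opp A z : nil_at A z -> nil_at (- A) z.
Proof. by case=> N AN0; exists N; rewrite exprNn -mulmxE -mulmxA AN0 mulmx0. Qed.

Lemma nil_at_add A B z : comm_mx A B -> nil_at A z -> nil_at B z -> nil_at (A + B) z.
Proof.
move=> cAB [N AN0] [N' BN0]; exists (N + N')%N.
rewrite exprDn_comm // mulmx_suml big1 // => i _.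
rewrite -[_ *m z]/(mulmxr z _) raddfMn /= -mulmxE.
suff -> : A ^+ (N + N' - i) *m B ^+ i *m z = 0 by rewrite mul0rn.
have [leN'i|ltiN'] := leqP N' i; first by rewrite -mulmxA (expmx_mul_eq0W BN0 leN'i) mulmx0.
have leN : (N <= N + N' - i)%N by rewrite -addnBA ?leq_addr // ltnW.
have cAB' : comm_mx (A ^+ (N + N' - i)) (B ^+ i) by apply/commrX/commr_sym/commrX.
by rewrite cAB' -mulmxA (expmx_mul_eq0W AN0 leN) mulmx0.
Qed.

Lemma nil_at_sub A B z : comm_mx A B -> nil_at A z -> nil_at B z -> nil_at (A - B) z.
Proof. by move=> cAB nA nB; apply: nil_at_add (comm_mxN cAB) nA (nil_at_opp nB). Qed.

Lemma nil_at_common (I : finType) (F : I -> 'M[R]_d) z :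
  (forall j, nil_at (F j) z) -> exists N, forall j, F j ^+ N *m z = 0.
Proof.
move=> /fin_all_exists[N FN0]; exists (\max_j N j) => j.
exact: expmx_mul_eq0W (FN0 j) (leq_bigmax j).
Qed.

End NilAt.

Lemma comm_mx_shift (R : comPzRingType) d (A B : 'M[R]_d) (a b : R) :
  comm_mx A B -> comm_mx (A - a%:M) (B - b%:M).
Proof.
move=> cAB; apply: comm_mxB; last exact: comm_mx_scalar.
by apply/comm_mx_sym/comm_mxB; [apply/comm_mx_sym | exact: comm_mx_scalar].
Qed.

Section Shifts.
Variables (R : comPzRingType) (d : nat) (A B : 'M[R]_d) (a b : R).
Hypothesis cAB : comm_mx A B.

Lemma nil_at_add_shift z : nil_at (A - a%:M) z -> nil_at (B - b%:M) z ->
  nil_at (A + B - (a + b)%:M) z.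
Proof.
move=> nA nB; rewrite raddfD /= opprD addrACA.
exact: nil_at_add (comm_mx_shift a b cAB) nA nB.
Qed.

Lemma nil_at_mul_shift z : nil_at (A - a%:M) z -> nil_at (B - b%:M) z ->
  nil_at (A *m B - (a * b)%:M) z.
Proof.
move=> nA nB.
have -> : A *m B - (a * b)%:M = B *m (A - a%:M) + a%:M *m (B - b%:M).
  by rewrite !mulmxBr cAB scalar_mxC -scalar_mxM addrA subrK.
have cBAa : comm_mx B (A - a%:M).
  by apply: comm_mxB; [exact: comm_mx_sym | exact: comm_mx_scalar].
have cBb : comm_mx (B - b%:M) B.
  by apply: comm_mx_sym; apply: comm_mxB; [exact: comm_mx_refl | exact: comm_mx_scalar].
apply: nil_at_add; last 2 first.
- exact: nil_at_mull nA.
- by apply: nil_at_mull nB; exact: comm_scalar_mx.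
apply: comm_mxM; first exact: comm_mx_scalar.
apply: comm_mx_sym; apply: comm_mxM => //.
exact: comm_mx_shift (comm_mx_sym cAB).
Qed.

Local Notation E1 := (A + B - (a + b)%:M).
Local Notation E2 := (A *m B - (a * b)%:M).

Let cAE1 : comm_mx A E1.
Proof. by apply: comm_mxB; [apply: comm_mxD | exact: comm_mx_scalar]. Qed.

Let cE2A : comm_mx E2 A.
Proof.
apply: comm_mx_sym; apply: comm_mxB; last exact: comm_mx_scalar.
exact: comm_mxM.
Qed.

Let cE2B : comm_mx E2 B.
Proof.
apply: comm_mx_sym; apply: comm_mxB; last exact: comm_mx_scalar.
by apply: comm_mxM; first exact: comm_mx_sym.
Qed.

Lemma nil_at_quadratic z : nil_at E1 z -> nil_at E2 z ->
  nil_at ((A - a%:M) *m (A - b%:M)) z.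
Proof.
move=> n1 n2.
have -> : (A - a%:M) *m (A - b%:M) = A *m E1 - E2.
  rewrite !mulmxBl !mulmxBr mulmxDr !mul_mx_scalar !mul_scalar_mx scalerDl.
  rewrite scale_scalar_mx mulrC !opprB !opprD !addrA.
  rewrite 3!(addrAC _ _ (- (A *m B))) addrK.
  by rewrite (addrAC (A *m A) (- (a *: A))) (addrAC _ (- (a *: A))).
apply: nil_at_sub; last exact: n2; last exact: nil_at_mull n1.
apply: comm_mx_sym; apply: comm_mxM => //.
by apply: comm_mxB; [apply: comm_mxD | exact: comm_mx_scalar].
Qed.

Lemma nil_at_cancel_shift z : nil_at (A - a%:M) z -> nil_at E1 z -> nil_at (B - b%:M) z.
Proof.
move=> nA n1; have -> : B - b%:M = E1 - (A - a%:M).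
  rewrite raddfD /= opprB !opprD !addrA (addrAC _ (- b%:M)) subrK.
  by rewrite (addrAC _ (- b%:M)) [A + B]addrC addrK.
by apply: nil_at_sub n1 nA; apply: comm_mxB; [exact: comm_mx_sym | exact: comm_mx_scalar].
Qed.

End Shifts.

Lemma nil_at_split (F : fieldType) d (A : 'M[F]_d) (a b : F) z :
  nil_at ((A - a%:M) *m (A - b%:M)) z ->
  exists P : 'M_d, [/\ forall B, comm_mx A B -> comm_mx P B,
    nil_at (A - a%:M) (P *m z) & nil_at (A - b%:M) ((1%:M - P) *m z)].
Proof.
case: d => [|d] in A z *.
  move=> _; exists 0; split=> [B _ | |]; first exact: comm0mx.
    by exists 0%N; rewrite [z]flatmx0 !mulmx0.
  by exists 0%N; rewrite [z]flatmx0 !mulmx0.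
case=> m; have [<-|neq_ab] := eqVneq a b => Qm0.
  exists 1%:M; split=> [B _ | | ]; first exact: comm1mx.
    by exists (2 * m)%N; rewrite mul1mx exprM expr2 -mulmxE.
  by exists 0%N; rewrite subrr mul0mx mulmx0.
have /Bezout_eq1_coprimepP[[u v] /= Buv] :
    coprimep (('X - a%:P) ^+ m) (('X - b%:P) ^+ m).
  by apply/coprimep_expl/coprimep_expr/coprimep_XsubC2; rewrite subr_eq0 eq_sym.
have hornerXsubC c : horner_mx A ('X - c%:P) = A - c%:M.
  by rewrite rmorphB /= horner_mx_X horner_mx_C.
have killQ w : horner_mx A (w * (('X - a%:P) * ('X - b%:P)) ^+ m) *m z = 0.
  by rewrite rmorphM rmorphXn rmorphM /= !hornerXsubC -mulmxE -mulmxA Qm0 mulmx0.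
exists (horner_mx A (v * ('X - b%:P) ^+ m)); split.
- by move=> B cAB; apply: comm_horner_mx.
- exists m; rewrite -hornerXsubC -rmorphXn mulmxA mulmxE -rmorphM /=.
  by rewrite -(killQ v) exprMn; congr (horner_mx A _ *m z); ring.
exists m; rewrite -hornerXsubC -rmorphXn -[1%:M](rmorph1 (horner_mx A)) -Buv.
rewrite rmorphD addrK mulmxA mulmxE -rmorphM /=.
by rewrite -(killQ u) exprMn; congr (horner_mx A _ *m z); ring.
Qed.

Lemma is_diagram_id n (a : lseq n) : is_diagram a a (id_diag n).
Proof. by apply/forallP => -[j|j]; rewrite !ffunE /= !eqxx. Qed.

Lemma is_diagram_swap n (k k' : 'I_n) (a : lseq n) :
  a k = a k' -> is_diagram a a (swap_diag k k').
Proof.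
move=> akk'; apply/forallP => -[j|j]; rewrite !ffunE /= tpermK !eqxx /=;
by case: tpermP => [->|->|] //; rewrite akk'.
Qed.

Section VBrModule.
Variables (r t : nat) (omega : nat -> C) (d : nat) (M : VBr_module r t omega d).
Local Notation n := (r + t).
Local Notation one a := (one_a (rho M) a).

Lemma one_a_mul_diag_eq0 (a b : lseq n) (D : diagram n) :
  is_Seq r a -> is_Seq r b -> is_diagram b b D -> b != a ->
  one a *m rho M b b D = 0 /\ rho M b b D *m one a = 0.
Proof.
move=> ha hb hD nba; split.
  by apply: (rho_mul0 M) => //; exact: is_diagram_id.
by apply: (rho_mul0 M) => //; [exact: is_diagram_id | rewrite eq_sym].
Qed.

Lemma one_a_idem a : is_Seq r a -> one a *m one a = one a.
Proof.
move=> ha; rewrite -[RHS]mulmx1 -(rho_unit M) mulmx_sumr (bigD1 a) //=.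
rewrite big1 ?addr0 // => b /andP[hb nba].
by have [] := one_a_mul_diag_eq0 ha hb (is_diagram_id b) nba.
Qed.

Lemma in_wt0 a (i : 'I_n -> C) : in_wt M a i 0.
Proof. by split; [exists 0; rewrite mulmx0 | exists 0%N => j; rewrite mulmx0]. Qed.

Lemma in_wtP a (i : 'I_n -> C) v : is_Seq r a ->
  in_wt M a i v <-> one a *m v = v /\ forall j, nil_at (Y M j - (i j)%:M) v.
Proof.
move=> ha; split=> [[[w ->] [N YN0]] | [Ov nv]].
  by split=> [|j]; [rewrite mulmxA one_a_idem | exists N].
by split; [exists v | exact: nil_at_common].
Qed.

Section Swap.
Variables (k k' : 'I_n) (a : lseq n).
Hypotheses (hk : val k' = (val k).+1) (ha : is_Seq r a) (hab : a k = a k').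
Local Notation O := (one a).
Local Notation S := (s_ (rho M) k k').
Local Notation s1a := (s1 (rho M) k k' a).
Local Notation Z := (Y M k).
Local Notation Z' := (Y M k').

Lemma s_mul_one_a : S *m O = s1a *m O.
Proof.
rewrite mulmx_suml (bigD1 a) //= big1 ?addr0 // => b /andP[hb nba].
rewrite /s1; case: eqP => [hbk | _]; last exact: mul0mx.
by have [] := one_a_mul_diag_eq0 ha hb (is_diagram_swap hbk) nba.
Qed.

Lemma one_a_mul_s1 : O *m s1a = s1a.
Proof.
rewrite -[RHS]mul1mx -(rho_unit M) mulmx_suml (bigD1 a) //=.
rewrite big1 ?addr0 // => b /andP[hb nba].
rewrite /s1 hab eqxx.
by have [] := one_a_mul_diag_eq0 hb ha (is_diagram_swap hab) (contra_neq esym nba).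
Qed.

Local Notation T := (s1a *m O).

Lemma comm_Y_one_a j : comm_mx (Y M j) O.
Proof. exact: Y_one. Qed.

Lemma s1_one_a_Y : T *m Z = Z' *m T - O /\ T *m Z' = Z *m T + O.
Proof.
have [YsZ YsZ'] := Y_s M hk ha hab.
have SYO j : S *m Y M j *m O = T *m Y M j.
  by rewrite -mulmxA comm_Y_one_a mulmxA s_mul_one_a.
rewrite SYO -[Z' *m S *m O]mulmxA s_mul_one_a in YsZ.
rewrite SYO -[Z *m S *m O]mulmxA s_mul_one_a in YsZ'.
by split; apply/eqP; rewrite addrC -subr_eq; [rewrite YsZ | rewrite YsZ'].
Qed.

Lemma comm_s1_one_a_add : comm_mx T (Z + Z').
Proof.
have [TZ TZ'] := s1_one_a_Y; rewrite /comm_mx mulmxDr TZ TZ' mulmxDl.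
by rewrite addrACA addNr addr0 addrC.
Qed.

Lemma comm_s1_one_a_mul : comm_mx T (Z *m Z').
Proof.
have [TZ TZ'] := s1_one_a_Y; rewrite /comm_mx mulmxA TZ mulmxBl.
rewrite -[Z' *m T *m Z']mulmxA TZ' mulmxDr.
by rewrite comm_Y_one_a !mulmxA (Y_comm M k' k) addrK.
Qed.

Lemma comm_s1_one_a_far j : j != k -> j != k' -> comm_mx T (Y M j).
Proof.
move=> jk jk'; have [YS _ _ _] := Y_far M hk jk jk'.
by rewrite /comm_mx -s_mul_one_a -mulmxA -comm_Y_one_a mulmxA -YS -mulmxA.
Qed.

Let cZZ' : comm_mx Z Z' := Y_comm M k k'.

(* Sees [i_k] and [i_{k+1}] only through their sum, so it is invariant under [sk_vec]. *)
Definition sym_wt (i : 'I_n -> C) y := [/\ O *m y = y,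
  nil_at (Z + Z' - (i k + i k')%:M) y &
  forall j, j != k -> j != k' -> nil_at (Y M j - (i j)%:M) y].

Lemma sym_wt_comm i y Q : (forall B, comm_mx Z B -> comm_mx Q B) ->
  sym_wt i y -> sym_wt i (Q *m y).
Proof.
move=> cQ [Oy nE1 nfar]; have cZ_shift B c : comm_mx Z B -> comm_mx (B - c%:M) Q.
  by move=> cZB; apply/comm_mx_sym/cQ/comm_mxB => //; exact: comm_mx_scalar.
split.
- by rewrite mulmxA -(cQ _ (comm_Y_one_a k)) -mulmxA Oy.
- exact: (nil_at_mulmx (cZ_shift _ _ (comm_mxD (comm_mx_refl Z) cZZ')) nE1).
by move=> j jk jk'; exact: (nil_at_mulmx (cZ_shift _ _ (Y_comm M k j)) (nfar j jk jk')).
Qed.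

Lemma sym_wt_swap i y : sym_wt i y -> sym_wt (sk_vec k k' i) y.
Proof.
case=> Oy nE1 nfar; split; rewrite /sk_vec; first exact: Oy.
  by rewrite tpermL tpermR (addrC (i k')); exact: nE1.
move=> j jk jk'; rewrite tpermD; first exact: nfar.
  by rewrite eq_sym.
by rewrite eq_sym.
Qed.

Lemma in_wt_of_sym_wt i y : sym_wt i y -> nil_at (Z - (i k)%:M) y -> in_wt M a i y.
Proof.
case=> Oy nE1 nfar nZ; apply/(in_wtP i y ha); split; first exact: Oy.
move=> j; have [-> // | jk] := eqVneq j k.
have [-> | jk'] := eqVneq j k'; last exact: nfar.
exact: (nil_at_cancel_shift cZZ' nZ nE1).
Qed.

Lemma s1_sym_wt i v : in_wt M a i v ->
  sym_wt i (s1a *m v) /\ nil_at ((Z - (i k)%:M) *m (Z - (i k')%:M)) (s1a *m v).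
Proof.
move=> /(in_wtP _ _ ha)[Ov nv]; have Tv : s1a *m v = T *m v by rewrite -mulmxA Ov.
have cT_shift B c : comm_mx T B -> comm_mx (B - c%:M) T.
  by move=> cTB; apply: comm_mx_sym; apply: comm_mxB cTB _; exact: comm_mx_scalar.
have nE1 := nil_at_mulmx (cT_shift _ _ comm_s1_one_a_add) (nil_at_add_shift cZZ' (nv k) (nv k')).
have nE2 := nil_at_mulmx (cT_shift _ _ comm_s1_one_a_mul) (nil_at_mul_shift cZZ' (nv k) (nv k')).
rewrite Tv; split; last exact: (nil_at_quadratic cZZ' nE1 nE2).
split; [by rewrite -Tv mulmxA one_a_mul_s1 | exact: nE1 |].
move=> j jk jk'; exact: (nil_at_mulmx (cT_shift _ _ (comm_s1_one_a_far jk jk')) (nv j)).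
Qed.

Lemma s1_weight_split i v : in_wt M a i v ->
  exists u w, [/\ in_wt M a i u, in_wt M a (sk_vec k k' i) w & s1a *m v = u + w].
Proof.
move=> /s1_sym_wt[sz nQ]; have [P [cP nPk nPk']] := nil_at_split nQ.
have cP' B : comm_mx Z B -> comm_mx (1%:M - P) B.
  by move=> cZB; apply: comm_mx_sym; apply: comm_mxB; [exact: comm_mx1 | exact/comm_mx_sym/cP].
exists (P *m s1a *m v), ((1%:M - P) *m s1a *m v); rewrite -!mulmxA; split.
- exact: (in_wt_of_sym_wt (sym_wt_comm cP sz) nPk).
- apply: (in_wt_of_sym_wt (sym_wt_swap (sym_wt_comm cP' sz))).
  by rewrite /sk_vec tpermL; exact: nPk'.
by rewrite mulmxBl mul1mx subrKC.
Qed.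

End Swap.

End VBrModule.

Theorem lemma3p1 (r t : nat) (omega : nat -> C) (d : nat)
  (M : VBr_module r t omega d)
  (k k' : 'I_(r + t)) (hk : val k' = (val k).+1)
  (a : lseq (r + t)) (ha : is_Seq r a) (i : 'I_(r + t) -> C) :
  forall v : 'cV[C]_d, in_wt M a i v ->
    exists u w : 'cV[C]_d,
      [/\ in_wt M a i u, in_wt M a (sk_vec k k' i) w &
          s1 (rho M) k k' a *m v = u + w].
Proof.
move=> v hv; have [hab|hab] := eqVneq (a k) (a k').
  exact: s1_weight_split hv.
exists 0, 0; split; try exact: in_wt0.
by rewrite /s1 (negPf hab) mul0mx addr0.
Qed.
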